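(* Let $M$ be a non-empty subset of $\operatorname{Sym}(n,\mathbb{R})$. The following are equivalent: (i) $M$ is non-dissipative, i.e. $0$ is the only positive semidefinite element of $\operatorname{span}_{\mathbb{R}}M$; (ii) there is a positive definite matrix $Q>0$ such that $\operatorname{tr}({}^tQFQ)=0$ for every $F\in M$; (iii) there is $T\in\operatorname{GL}(n,\mathbb{R})$ such that $\operatorname{tr}({}^tTFT)=0$ for every $F\in M$. *)

From HB Require Import structures.
From mathcomp Require Import all_boot all_order all_algebra.
From mathcomp Require Import reals.
Set Implicit Arguments. Unset Strict Implicit. Unset Printing Implicit Defensive.
Import Order.TTheory GRing.Theory Num.Theory.
Local Open Scope ring_scope.

Definition symmetric_mx (R : realType) (n : nat) (A : 'M[R]_n) : Prop :=
  A^T = A.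

Definition psd_mx (R : realType) (n : nat) (A : 'M[R]_n) : Prop :=
  symmetric_mx A /\ forall v : 'cV[R]_n, 0 <= (v^T *m A *m v) 0 0.

Definition pd_mx (R : realType) (n : nat) (A : 'M[R]_n) : Prop :=
  symmetric_mx A /\ forall v : 'cV[R]_n, v != 0 -> 0 < (v^T *m A *m v) 0 0.

Definition in_span (R : realType) (n : nat) (M : 'M[R]_n -> Prop)
    (A : 'M[R]_n) : Prop :=
  exists (k : nat) (c : 'I_k -> R) (F : 'I_k -> 'M[R]_n),
    (forall i, M (F i)) /\ A = \sum_(i < k) c i *: F i.

Definition non_dissipative (R : realType) (n : nat) (M : 'M[R]_n -> Prop) : Prop :=
  forall A, in_span M A -> psd_mx A -> A = 0.

(* (ii) => (iii) as positive definite matrices are invertible.  (iii) => (i):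
   tr (T^T A T) is the sum of the values of the quadratic form of A at the columns
   of T, so for A >= 0 in span M these values vanish, hence A T = 0 and A = 0.
   (i) => (ii): the compact convex set of density matrices (psd of trace 1) misses
   span M.  The density whose class modulo span M has least norm yields a linear
   form vanishing on span M and positive on all densities, i.e. a matrix P > 0
   with tr (F P) = 0 for F in M.  Its positive definite square root Q then
   satisfies tr (Q^T F Q) = tr (F P) = 0. *)

From HB Require Import structures.
From mathcomp Require Import all_boot all_order all_algebra.
From mathcomp Require Import reals complex spectral sesquilinear.
From mathcomp Require Import classical_sets boolp topology normedtype derive.
From mathcomp Require Import ring lra.
Set Implicit Arguments. Unset Strict Implicit. Unset Printing Implicit Defensive.
Import Order.TTheory GRing.Theory Num.Theory.
Import numFieldTopology.Exports numFieldNormedType.Exports.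
Local Open Scope ring_scope.

Section QuadraticForms.
Variable R : realType.
Implicit Types (m n p : nat).

Definition dotr p (a b : 'rV[R]_p) : R := \sum_j a 0 j * b 0 j.

Lemma dotr_ge0 p (a : 'rV[R]_p) : 0 <= dotr a a.
Proof. by apply: sumr_ge0 => j _; rewrite -expr2 sqr_ge0. Qed.

Lemma dotr_eq0 p (a : 'rV[R]_p) : dotr a a = 0 -> a = 0.
Proof.
move=> a0; apply/rowP => j; rewrite mxE; apply/eqP; rewrite -sqrf_eq0 expr2.
by apply/eqP; apply: (psumr_eq0P _ a0) => // i _; rewrite -expr2 sqr_ge0.
Qed.

Lemma dotr_gt0 p (a : 'rV[R]_p) : a != 0 -> 0 < dotr a a.
Proof. by move=> a0; rewrite lt_def dotr_ge0 andbT; apply: contra a0 => /eqP/dotr_eq0->. Qed.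

Lemma mulmx_trv_self n (v : 'cV[R]_n) : (v^T *m v) 0 0 = dotr v^T v^T.
Proof. by rewrite mxE; apply: eq_bigr => i _; rewrite !mxE. Qed.

Lemma mulmx_trv_self_gt0 n (v : 'cV[R]_n) : v != 0 -> 0 < (v^T *m v) 0 0.
Proof. by move=> v0; rewrite mulmx_trv_self dotr_gt0 // trmx_eq0. Qed.

Definition qform n (A : 'M[R]_n) (v : 'cV[R]_n) : R := (v^T *m A *m v) 0 0.

Lemma qformE n (A : 'M[R]_n) v : qform A v = \sum_i \sum_j v i 0 * A i j * v j 0.
Proof.
rewrite /qform mxE exchange_big; apply: eq_bigr => j _; rewrite mxE big_distrl.
by apply: eq_bigr => i _; rewrite !mxE.
Qed.

Lemma qform0 n (A : 'M[R]_n) : qform A 0 = 0.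
Proof. by rewrite /qform mulmx0 mxE. Qed.

Lemma qform_mxtrace n (A : 'M[R]_n) v : qform A v = \tr (v *m v^T *m A).
Proof. by rewrite /qform -(mulmxA v) mxtrace_mulC trace_mx11. Qed.

Lemma mxtrace_conj_qform n m (A : 'M[R]_n) (T : 'M[R]_(n, m)) :
  \tr (T^T *m A *m T) = \sum_j qform A (col j T).
Proof.
apply: eq_bigr => j _; rewrite /qform !mxE; apply: eq_bigr => k _.
by rewrite !mxE; congr (_ * _); apply: eq_bigr => l _; rewrite !mxE.
Qed.

Lemma qformDZ n (A : 'M[R]_n) v w (t : R) : symmetric_mx A ->
  qform A (v + t *: w) = qform A v + 2 * t * (w^T *m A *m v) 0 0 + t ^+ 2 * qform A w.
Proof.
move=> sA; have vAw : (v^T *m A *m w) 0 0 = (w^T *m A *m v) 0 0.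
  have -> : (v^T *m A *m w) 0 0 = (v^T *m A *m w)^T 0 0 by rewrite [RHS]mxE.
  by rewrite !trmx_mul trmxK sA mulmxA.
rewrite /qform [(v + _)^T]linearD /= [(t *: w)^T]linearZ /= !mulmxDl !mulmxDr.
rewrite -!scalemxAl -!scalemxAr.
move: vAw; set b := v^T *m A *m w; set c := w^T *m A *m v.
set a := v^T *m A *m v; set d := w^T *m A *m w; clearbody a b c d => vAw.
by rewrite !mxE vAw; ring.
Qed.

Lemma linear_coef_ge0 (a c : R) : 0 <= c ->
  (forall t, 0 <= t <= 1 -> 0 <= 2 * t * a + t ^+ 2 * c) -> 0 <= a.
Proof.
move=> c0 ineq; rewrite leNgt; apply/negP => a0.
(* the parabola is negative at [t = a / (a - c)], which lies in [(0, 1]] *)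
pose t := a / (a - c).
have t01 : 0 <= t <= 1 by rewrite /t ler_ndivlMr ?ler_ndivrMr; lra.
have tE : t * (a - c) = a by rewrite /t divfK // ltr0_neq0 //; lra.
have := ineq t t01; nra.
Qed.

Lemma psd_qform_eq0 n (A : 'M[R]_n) v : psd_mx A -> qform A v = 0 -> A *m v = 0.
Proof.
move=> [sA A_ge0] Av0; set w := - (A *m v).
have coef : (w^T *m A *m v) 0 0 = - dotr (A *m v)^T (A *m v)^T.
  by rewrite -mulmx_trv_self /w linearN /= !mulNmx -mulmxA [LHS]mxE.
suff /dotr_eq0/eqP : dotr (A *m v)^T (A *m v)^T = 0 by rewrite trmx_eq0 => /eqP.
apply/eqP; rewrite eq_le dotr_ge0 andbT -oppr_ge0 -coef.
apply: (linear_coef_ge0 (A_ge0 w)) => t _.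
by have := A_ge0 (v + t *: w); rewrite -/(qform _ _) qformDZ // Av0 add0r.
Qed.

Lemma psd_mxtrace_conj_eq0 n (A T : 'M[R]_n) : psd_mx A -> T \in unitmx ->
  \tr (T^T *m A *m T) = 0 -> A = 0.
Proof.
move=> psdA unitT; rewrite mxtrace_conj_qform => /psumr_eq0P qA0.
have AT0 : A *m T = 0.
  apply/matrixP => i j; have := psd_qform_eq0 psdA (qA0 (fun k _ => psdA.2 _) j isT).
  by rewrite colE mulmxA -colE => /colP/(_ i); rewrite !mxE.
by rewrite -[A](mulmxK unitT) AT0 mul0mx.
Qed.

Lemma non_dissipative_conj_traceless n (M : 'M[R]_n -> Prop) (T : 'M[R]_n) :
  T \in unitmx -> (forall F, M F -> \tr (T^T *m F *m T) = 0) -> non_dissipative M.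
Proof.
move=> unitT MT0 A [k [c [F [MF ->]]]] psdA; apply: psd_mxtrace_conj_eq0 psdA unitT _.
rewrite mulmx_sumr mulmx_suml linear_sum big1 // => i _.
by rewrite -scalemxAr -scalemxAl linearZ /= MT0 // mulr0.
Qed.

Lemma pd_qform_ge0 n (Q : 'M[R]_n) v : pd_mx Q -> 0 <= qform Q v.
Proof.
by move=> [_ Q_gt0]; have [->|/Q_gt0/ltW//] := eqVneq v 0; rewrite qform0.
Qed.

Lemma pd_qform_eq0 n (Q : 'M[R]_n) v : pd_mx Q -> qform Q v = 0 -> v = 0.
Proof.
by move=> [_ Q_gt0] Qv0; apply/eqP; apply: contraT => /Q_gt0; rewrite -/(qform _ _) Qv0 ltxx.
Qed.

Lemma pd_mx_unit n (Q : 'M[R]_n) : pd_mx Q -> Q \in unitmx.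
Proof.
move=> pdQ; rewrite -row_free_unit -kermx_eq0; apply/rowV0P => v /sub_kermxP vQ0.
apply/trmx_inj; rewrite trmx0; apply: (pd_qform_eq0 pdQ).
by rewrite /qform trmxK -mulmxA -[Q]pdQ.1 -trmx_mul vQ0 trmx0 mulmx0 mxE.
Qed.

Lemma pd_anticommute_eq0 n (Q S : 'M[R]_n) : pd_mx Q -> Q *m S + S *m Q = 0 -> S = 0.
Proof.
move=> pdQ QS_SQ.
have tr0 : \tr (S^T *m Q *m S) + \tr (S *m Q *m S^T) = 0.
  rewrite [X in _ + X]mxtrace_mulC -mulmxA -linearD -mulmxDr.
  by rewrite QS_SQ mulmx0 linear0.
have ge0 (T : 'M[R]_n) : 0 <= \tr (T^T *m Q *m T).
  by rewrite mxtrace_conj_qform sumr_ge0 // => j _; apply: pd_qform_ge0.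
have : \tr (S^T *m Q *m S) = 0 by have := ge0 S; have := ge0 S^T; rewrite trmxK; lra.
rewrite mxtrace_conj_qform => /psumr_eq0P qS0.
apply/matrixP => i j; have := pd_qform_eq0 pdQ (qS0 (fun k _ => pd_qform_ge0 _ pdQ) j isT).
by move/colP/(_ i); rewrite !mxE.
Qed.

End QuadraticForms.

Section HermitianSqrt.
Variable C : numClosedFieldType.
Local Open Scope sesquilinear_scope.

Lemma form_expand n (A : 'M[C]_n) (y : 'rV_n) :
  (y *m A *m y ^t*) 0 0 = \sum_k \sum_l y 0 k * A k l * (y 0 l)^*.
Proof.
rewrite mxE exchange_big; apply: eq_bigr => l _; rewrite mxE big_distrl /=.
by apply: eq_bigr => k _; rewrite !mxE.
Qed.

Lemma diag_form_gt0 n (r w : 'rV[C]_n) : (forall i, 0 < r 0 i) -> w != 0 ->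
  0 < (w *m diag_mx r *m w ^t*) 0 0.
Proof.
move=> r_gt0 w0; have [i wi0] : exists i, w 0 i != 0.
  apply/existsP; apply: contraR w0 => /existsPn wi0.
  by apply/eqP/rowP => i; rewrite mxE; apply/eqP/negPn.
have termE j : (w *m diag_mx r) 0 j * (w ^t*) j 0 = r 0 j * (w 0 j * (w 0 j)^*).
  by rewrite mul_mx_diag !mxE mulrAC mulrC.
rewrite mxE (bigD1 i) //=; apply: ltr_pwDl.
  by rewrite termE pmulr_rgt0 ?mul_conjC_gt0.
by apply: sumr_ge0 => j _; rewrite termE mulr_ge0 ?mul_conjC_ge0 ?ltW.
Qed.

Lemma hermitian_pos_sqrt n (A : 'M[C]_n) : A \is hermsymmx ->
    (forall x : 'rV_n, x != 0 -> 0 < (x *m A *m x ^t*) 0 0) ->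
  exists B : 'M[C]_n, [/\ B ^t* = B, B *m B = A &
    forall x : 'rV_n, x != 0 -> 0 < (x *m B *m x ^t*) 0 0].
Proof.
move=> hermA A_gt0; set U := spectralmx A; set d := spectral_diag A.
have unitaryU : U \is unitarymx := spectral_unitarymx A.
have UUt : U *m U ^t* = 1%:M by apply/unitarymxP.
have UtU : U ^t* *m U = 1%:M by rewrite -invmx_unitary // mulVmx // unitarymx_unit.
have Adiag : A = U ^t* *m diag_mx d *m U.
  by rewrite -invmx_unitary //; apply/orthomx_spectralP/hermitian_normalmx.
have d_gt0 i : 0 < d 0 i.
  have -> : d 0 i = (row i U *m A *m (row i U) ^t*) 0 0.
    have -> : d 0 i = (U *m A *m U ^t*) i i.
      by rewrite Adiag !mulmxA UUt mul1mx -mulmxA UUt mulmx1 mxE eqxx mulr1n.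
    rewrite !mxE; apply: eq_bigr => k _; rewrite !mxE; congr (_ * _).
    by apply: eq_bigr => l _; rewrite !mxE.
  apply: A_gt0; apply: contra_neq (oner_neq0 C) => Ui0.
  by have /rowP/(_ i) := congr1 (row i) UUt; rewrite row_mul Ui0 mul0mx !mxE eqxx.
pose r := \row_i sqrtC (d 0 i).
have r_gt0 i : 0 < r 0 i by rewrite mxE sqrtC_gt0.
exists (U ^t* *m diag_mx r *m U); split.
- rewrite !trmx_mul !map_mxM trmxCK.
  have -> : (diag_mx r) ^t* = diag_mx r.
    apply/matrixP => i j; rewrite !mxE rmorphMn /= geC0_conj ?sqrtC_ge0 ?ltW //.
    by rewrite eq_sym; case: eqP => [->|].
  by rewrite mulmxA.
- rewrite !mulmxA -[_ *m U *m U ^t*]mulmxA UUt mulmx1.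
  rewrite -[_ *m diag_mx r *m diag_mx r]mulmxA mulmx_diag.
  rewrite Adiag; congr (_ *m diag_mx _ *m _); apply/rowP => i.
  by rewrite !mxE -expr2 sqrtCK.
move=> x x0; set w := x *m U ^t*.
have -> : x *m (U ^t* *m diag_mx r *m U) *m x ^t* = w *m diag_mx r *m w ^t*.
  by rewrite /w !trmx_mul !map_mxM trmxCK !mulmxA.
apply: diag_form_gt0 => //; apply: contra_neq x0 => w0.
by rewrite -[x]mulmx1 -UtU mulmxA -/w w0 mul0mx.
Qed.

End HermitianSqrt.

Section RealSqrt.
Variable R : realType.
Local Open Scope sesquilinear_scope.
Local Notation Re := (@complex.Re R).
Local Notation Im := (@complex.Im R).
Local Notation toC := (real_complex R).

Lemma complexP (z w : R[i]) : Re z = Re w -> Im z = Im w -> z = w.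
Proof. by case: z w => a b [c d] /= -> ->. Qed.

Lemma form_real_symmetric n (P : 'M[R]_n) (y : 'rV[R[i]]_n) : symmetric_mx P ->
  (y *m map_mx toC P *m y ^t*) 0 0 = toC (qform P (map_mx Re y)^T + qform P (map_mx Im y)^T).
Proof.
move=> sP; rewrite form_expand !qformE -big_split; apply: complexP => /=.
  rewrite (raddf_sum Re); apply: eq_bigr => k _.
  rewrite -big_split (raddf_sum Re); apply: eq_bigr => l _ /=.
  by rewrite !mxE; case: (y 0 k) => a b; case: (y 0 l) => c e /=; ring.
rewrite (raddf_sum Im).
(* the imaginary part is antisymmetric in (k, l) *)
pose t k l := P k l * (Im (y 0 k) * Re (y 0 l) - Re (y 0 k) * Im (y 0 l)).
have -> : \sum_k Im (\sum_l y 0 k * (map_mx toC P) k l * (y 0 l)^*) = \sum_k \sum_l t k l.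
  apply: eq_bigr => k _; rewrite (raddf_sum Im); apply: eq_bigr => l _.
  by rewrite !mxE /t; case: (y 0 k) => a b; case: (y 0 l) => c e /=; ring.
have tN : \sum_k \sum_l t k l = - \sum_k \sum_l t l k.
  rewrite -sumrN; apply: eq_bigr => k _; rewrite -sumrN; apply: eq_bigr => l _.
  by rewrite /t -[in LHS]sP mxE; ring.
by move: tN; rewrite [X in _ = - X]exchange_big /=; lra.
Qed.

Lemma form_real_pd_gt0 n (P : 'M[R]_n) : pd_mx P -> forall y : 'rV[R[i]]_n, y != 0 ->
  0 < (y *m map_mx toC P *m y ^t*) 0 0.
Proof.
move=> pdP y y0; rewrite form_real_symmetric; last exact: pdP.1.
rewrite -[0]/(toC 0) ltcR.
have [Rey0|Rey0] := eqVneq (map_mx Re y) 0; last first.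
  by apply: ltr_pwDl; [apply: pdP.2; rewrite trmx_eq0 | exact: pd_qform_ge0].
rewrite Rey0 trmx0 qform0 add0r; apply: pdP.2; rewrite trmx_eq0.
apply: contra_neq y0 => Imy0; apply/rowP => k; apply: complexP.
  by have /rowP/(_ k) := Rey0; rewrite !mxE.
by have /rowP/(_ k) := Imy0; rewrite !mxE.
Qed.

Lemma Re_hermitian_pd n (B : 'M[R[i]]_n) : B ^t* = B ->
    (forall x : 'rV_n, x != 0 -> 0 < (x *m B *m x ^t*) 0 0) ->
  pd_mx (map_mx Re B).
Proof.
move=> hermB B_gt0; split.
  by apply/matrixP => i j; rewrite !mxE -[in RHS]hermB !mxE; case: (B j i).
move=> v v0; set x := (map_mx toC v)^T.
have x0 : x != 0.
  apply: contra_neq v0 => /rowP x0; apply/colP => i.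
  by have := x0 i; rewrite !mxE => -[].
have := B_gt0 x x0; rewrite ltcE => /andP[_]; congr (0 < _).
rewrite form_expand (raddf_sum Re) -/(qform _ _) qformE.
apply: eq_bigr => k _; rewrite (raddf_sum Re); apply: eq_bigr => l _.
by rewrite !mxE; case: (B k l) => a b /=; ring.
Qed.

(* If [B = Q + i S] is the hermitian square root of [P], then [Q ^ 2 - S ^ 2 = P]
   and [Q S + S Q = 0], which forces [S = 0] as [Q] is positive definite. *)
Lemma pd_sqrt n (P : 'M[R]_n) : pd_mx P -> exists Q, pd_mx Q /\ Q *m Q = P.
Proof.
move=> pdP; have hermP : map_mx toC P \is hermsymmx.
  apply/is_hermitianmxP; rewrite expr0 scale1r; apply/matrixP => i j.
  by rewrite !mxE -[in RHS]pdP.1 mxE; apply: complexP => /=; rewrite ?oppr0.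
have [B [hermB BB B_gt0]] := hermitian_pos_sqrt hermP (form_real_pd_gt0 pdP).
pose Q := map_mx Re B; pose S := map_mx Im B.
have pdQ : pd_mx Q := Re_hermitian_pd hermB B_gt0.
have QQ_SS : Q *m Q - S *m S = P.
  apply/matrixP => i j; rewrite !mxE -sumrB.
  transitivity (Re ((B *m B) i j)); last by rewrite BB mxE.
  rewrite mxE (raddf_sum Re); apply: eq_bigr => k _.
  by rewrite !mxE; case: (B i k) (B k j) => a b [c d].
have QS_SQ : Q *m S + S *m Q = 0.
  apply/matrixP => i j; rewrite !mxE -big_split.
  transitivity (Im ((B *m B) i j)); last by rewrite BB mxE.
  rewrite mxE (raddf_sum Im); apply: eq_bigr => k _.
  by rewrite !mxE; case: (B i k) (B k j) => a b [c d] /=; ring.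
exists Q; split => //.
by rewrite -QQ_SS (pd_anticommute_eq0 pdQ QS_SQ) mulmx0 subr0.
Qed.

End RealSqrt.

Section Separation.
Variable R : realType.
Local Open Scope classical_set_scope.
Implicit Types (n N p : nat).

Lemma span_as_rowspace n (M : 'M[R]_n -> Prop) : exists k (V : 'M[R]_(k, n * n)),
  (forall F, M F -> (mxvec F <= V)%MS) /\
  (forall u, (u <= V)%MS -> in_span M (vec_mx u)).
Proof.
(* take a family of elements of M whose vectorizations have maximal rank *)
pose spans r := exists k (V : 'M[R]_(k, n * n)),
  (forall i, M (vec_mx (row i V))) /\ \rank V = r.
have spans0 : exists r, `[< spans r >].
  by exists 0%N; apply/asboolP; exists 0%N, 0; rewrite mxrank0; split => // -[].
have spans_le r : `[< spans r >] -> (r <= n * n)%N.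
  by move=> /asboolP [k [V [_ <-]]]; exact: rank_leq_col.
have [r /asboolP [k [V [MV rankV]]] r_max] := ex_maxnP spans0 spans_le.
exists k, V; split; last first.
  move=> u /submxP [D ->]; exists k, (fun i => D 0 i), (fun i => vec_mx (row i V)).
  by split => //; rewrite mulmx_sum_row linear_sum; apply: eq_bigr => i _; rewrite linearZ.
move=> F MF; apply: contraT => FV; set W := col_mx V (mxvec F).
have VW : (V <= W)%MS by rewrite -addsmxE addsmxSl.
have : (\rank V < \rank W)%N.
  rewrite (ltn_leqif (mxrank_leqif_sup VW)); apply: contra FV => WV.
  by apply: submx_trans WV; rewrite -addsmxE addsmxSr.
rewrite rankV ltnNge => /negP[]; apply: r_max; apply/asboolP.
exists (k + 1)%N, W; split => // i; rewrite /W; case: (split_ordP i) => j ->.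
  by rewrite rowKu.
rewrite rowKd (ord1 j); have -> : row 0 (mxvec F) = mxvec F by apply/rowP => l; rewrite mxE.
by rewrite mxvecK.
Qed.

Lemma scalar_sum (V : lmodType R) (g : V -> R) (I : Type) (r : seq I)
    (c : I -> R) (F : I -> V) :
  scalar g -> g (\sum_(i <- r) c i *: F i) = \sum_(i <- r) c i * g (F i).
Proof.
move=> lin_g; pose gL : {scalar V} := HB.pack g (GRing.isLinear.Build _ _ _ _ g lin_g).
by rewrite -[g]/(gL : V -> R) linear_sum; apply: eq_bigr => i _; exact: linearZ.
Qed.

Lemma scalar_continuous N (g : 'rV[R]_N -> R) : scalar g -> continuous g.
Proof.
move=> lin_g; have -> : g = fun u => \sum_(i < N) u 0 i * g (delta_mx 0 i).
  apply: funext => u; rewrite -scalar_sum //; congr g.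
  by rewrite {1}[u]matrix_sum_delta big_ord1.
apply: continuous_big => //; first exact: add_continuous.
move=> i _ u; have coord_i : {for u, continuous (fun v : 'rV[R]_N => v 0 i)}.
  exact: coord_continuous.
have cst_i : {for u, continuous (fun=> g (delta_mx 0 i) : R)} by exact: cst_continuous.
exact: (continuousM coord_i cst_i).
Qed.

Lemma closed_scalar_eq N (g : 'rV[R]_N -> R) c : scalar g -> closed [set u | g u = c].
Proof.
move=> lin_g; apply: (preimage_closed _ (@closed_eq _ c)) => u _.
exact: scalar_continuous.
Qed.

Lemma closed_scalar_ge0 N (g : 'rV[R]_N -> R) : scalar g -> closed [set u | 0 <= g u].
Proof.
move=> lin_g; apply: (preimage_closed _ (@closed_ge _ 0)) => u _.
exact: scalar_continuous.
Qed.

(* Density matrices, vectorized since Heine-Borel is available for row vectors. *)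
Definition densities n : set 'rV[R]_(n * n) :=
  [set u | psd_mx (vec_mx u) /\ \tr (vec_mx u) = 1].

Lemma delta_form n (A : 'M[R]_n) i j :
  ((delta_mx i 0 : 'cV_n)^T *m A *m (delta_mx j 0 : 'cV_n)) 0 0 = A i j.
Proof. by rewrite trmx_delta -colE -rowE !mxE. Qed.

Lemma density_entry_le1 n (u : 'rV[R]_(n * n)) i j :
  densities u -> `|vec_mx u i j| <= 1.
Proof.
move=> [[sA A_ge0] trA1]; set A := vec_mx u in sA A_ge0 trA1 *.
have diag_ge0 k : 0 <= A k k by have := A_ge0 (delta_mx k 0); rewrite delta_form.
have diag_le1 k : A k k <= 1.
  rewrite -trA1 /mxtrace (bigD1 k) //= lerDl; exact: sumr_ge0.
have qA t : 0 <= A j j + 2 * t * A i j + t ^+ 2 * A i i.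
  have := A_ge0 (delta_mx j 0 + t *: delta_mx i 0).
  by rewrite -/(qform _ _) qformDZ // /qform !delta_form.
have := qA 1; have := qA (-1); have := diag_le1 i; have := diag_le1 j.
have := diag_ge0 i; have := diag_ge0 j; rewrite ler_norml => *; apply/andP; split; nra.
Qed.

Lemma densities_closed n : closed (@densities n).
Proof.
have -> : @densities n =
  (\bigcap_(p in [set: 'I_n * 'I_n]) [set u | vec_mx u p.1 p.2 - vec_mx u p.2 p.1 = 0])
  `&` (\bigcap_(v in [set: 'cV[R]_n]) [set u | 0 <= qform (vec_mx u) v])
  `&` [set u | \tr (vec_mx u) = 1].
  apply: funext => u; apply: propext; split.
    move=> [[sA A_ge0] trA1]; split => //; split => [[i j] _|v _] /=.
      by rewrite -[in X in X - _]sA mxE subrr.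
    exact: A_ge0.
  move=> [[symA A_ge0] trA1]; split => //; split => [|v]; last exact: A_ge0.
  by apply/matrixP => i j; apply/eqP; rewrite mxE -subr_eq0; apply/eqP/(symA (j, i)).
apply: closedI; first apply: closedI.
- apply: closed_bigI => -[i j] _; apply: closed_scalar_eq => a x y.
  by rewrite !linearP !mxE; ring.
- apply: closed_bigI => v _; apply: closed_scalar_ge0 => a x y.
  by rewrite /qform linearP /= mulmxDr mulmxDl -scalemxAr -scalemxAl !mxE.
- by apply: closed_scalar_eq => a x y; rewrite !linearP.
Qed.

Lemma densities_compact n : compact (@densities n).
Proof.
apply: bounded_closed_compact; last exact: densities_closed.
exists 1; split; first exact: num_real.
move=> b b1 u Ku; apply: le_trans (ltW b1).
rewrite /Num.norm /= mx_normrE; apply: bigmax_le => //= -[i k] _.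
rewrite (ord1 i); case: (mxvec_indexP k) => j l.
by rewrite -[u]vec_mxK mxvecE; exact: density_entry_le1.
Qed.

Lemma densities_convex n (u w : 'rV[R]_(n * n)) t : 0 <= t <= 1 ->
  densities u -> densities w -> densities ((1 - t) *: u + t *: w).
Proof.
move=> /andP[t0 t1] [[su u_ge0] tru] [[sw w_ge0] trw].
rewrite /densities /= linearP linearZ /=; split; first split.
- by rewrite /symmetric_mx linearP linearZ /= su sw.
- move=> v; have := u_ge0 v; have := w_ge0 v.
  rewrite mulmxDr mulmxDl -!scalemxAr -!scalemxAl !mxE => vw vu.
  by rewrite addr_ge0 // mulr_ge0 //; lra.
- by rewrite linearP linearZ /= tru trw; ring.
Qed.

Lemma qform_rank1 n (x v : 'cV[R]_n) : qform (x *m x^T) v = ((x^T *m v) 0 0) ^+ 2.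
Proof.
rewrite /qform mulmxA -(mulmxA (v^T *m x)) mxE big_ord1 expr2; congr (_ * _).
have -> : (v^T *m x) 0 0 = (v^T *m x)^T 0 0 by rewrite [RHS]mxE.
by rewrite trmx_mul trmxK.
Qed.

Lemma rank1_density n (x : 'cV[R]_n) : x != 0 ->
  densities (mxvec (((x^T *m x) 0 0)^-1 *: (x *m x^T))).
Proof.
move=> x0; have xx_gt0 := mulmx_trv_self_gt0 x0.
rewrite /densities /= mxvecK; split; first split.
- by rewrite /symmetric_mx linearZ /= trmx_mul trmxK.
- move=> v; rewrite -scalemxAr -scalemxAl mxE -/(qform _ _) qform_rank1.
  by rewrite mulr_ge0 ?sqr_ge0 // invr_ge0 ltW.
- by rewrite linearZ /= mxtrace_mulC trace_mx11 mulVf // gt_eqF.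
Qed.

Lemma dotr_convex p (z y : 'rV[R]_p) t :
  dotr ((1 - t) *: z + t *: y) ((1 - t) *: z + t *: y) =
  dotr z z + (2 * t * (dotr y z - dotr z z) + t ^+ 2 * dotr (y - z) (y - z)).
Proof.
rewrite /dotr mulr_sumr -sumrB mulr_sumr -!big_split /=.
by apply: eq_bigr => j _; rewrite !mxE; ring.
Qed.

Lemma dotr_scalar p (z : 'rV[R]_p) : scalar (fun x : 'rV[R]_p => dotr x z).
Proof.
move=> a x y; rewrite /dotr mulr_sumr -big_split.
by apply: eq_bigr => j _; rewrite !mxE mulrDl mulrA.
Qed.

Lemma compact_convex_separation N p (C : 'M[R]_(N, p)) (K : set 'rV[R]_N) :
    K !=set0 -> compact K ->
    (forall u w t, 0 <= t <= 1 -> K u -> K w -> K ((1 - t) *: u + t *: w)) ->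
    (forall u, K u -> u *m C != 0) ->
  exists z : 'rV[R]_p, forall u, K u -> 0 < dotr (u *m C) z.
Proof.
move=> K0 cK convK KC0; pose f u := dotr (u *m C) (u *m C).
have f_cont : continuous f.
  apply: continuous_big => //; first exact: add_continuous.
  move=> j _ u; have coord_j : continuous (fun v : 'rV[R]_N => (v *m C) 0 j).
    by apply: scalar_continuous => a v w; rewrite mulmxDl -scalemxAl !mxE.
  exact: (continuousM (coord_j u) (coord_j u)).
have [us /set_mem Kus us_min] := compact_EVT_min K0 cK (continuous_subspaceT f_cont).
set z := us *m C; exists z => u Ku; set y := u *m C.
suff : dotr z z <= dotr y z by apply: lt_le_trans; apply/dotr_gt0/KC0.
have ineq t : 0 <= t <= 1 ->
    0 <= 2 * t * (dotr y z - dotr z z) + t ^+ 2 * dotr (y - z) (y - z).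
  move=> t01; have := us_min _ (mem_set (convK _ _ _ t01 Kus Ku)).
  by rewrite /f mulmxDl -!scalemxAl -/z -/y dotr_convex lerDl.
by rewrite -subr_ge0; apply: linear_coef_ge0 ineq; exact: dotr_ge0.
Qed.

Lemma scalar_mxtrace n (phi : 'M[R]_n -> R) : scalar phi ->
  exists P : 'M[R]_n, forall X, phi X = \tr (X *m P).
Proof.
move=> lin_phi; exists (\matrix_(i, j) phi (delta_mx j i)) => X.
rewrite /mxtrace; under [RHS]eq_bigr do rewrite mxE.
rewrite {1}[X]matrix_sum_delta !pair_big scalar_sum //=.
by apply: eq_bigr => -[i j] _; rewrite !mxE.
Qed.

Lemma mxtrace_mul_symmetrize n (F P : 'M[R]_n) : symmetric_mx F ->
  \tr (F *m (P + P^T)) = 2 * \tr (F *m P).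
Proof.
move=> sF; rewrite mulmxDr linearD /= -[in X in _ + X]mxtrace_tr trmx_mul trmxK sF.
by rewrite mxtrace_mulC mulr2n mulrDl mul1r.
Qed.

Lemma non_dissipative_pd_annihilator n (M : 'M[R]_n -> Prop) :
    (forall F, M F -> symmetric_mx F) -> non_dissipative M ->
  exists P, pd_mx P /\ forall F, M F -> \tr (F *m P) = 0.
Proof.
case: n M => [|n] M symM ndM.
  exists 0; split; last by move=> F _; rewrite mulmx0 linear0.
  by split => [|v]; rewrite ?flatmx0 ?eqxx // /symmetric_mx trmx0.
have [k [V [MV spanV]]] := span_as_rowspace M; set C := cokermx V.
(* [u *m C = 0] iff [u] is in the row space of [V], i.e. [vec_mx u] is in span M *)
have KC0 u : densities u -> u *m C != 0.
  move=> Ku; apply/eqP => uC0.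
  have u0 : vec_mx u = 0 by apply: ndM Ku.1; apply: spanV; rewrite submxE uC0.
  by move: Ku.2; rewrite u0 linear0 => /eqP; rewrite eq_sym oner_eq0.
have K0 : @densities n.+1 !=set0.
  eexists; apply: (@rank1_density _ (delta_mx 0 0)).
  by apply/negP => /eqP/matrixP/(_ 0 0)/eqP; rewrite !mxE /= oner_eq0.
have [z z_pos] :=
  compact_convex_separation K0 (@densities_compact n.+1) (@densities_convex n.+1) KC0.
pose phi X := dotr (mxvec X *m C) z.
have [P0 phiE] : exists P0, forall X, phi X = \tr (X *m P0).
  apply: scalar_mxtrace => a X Y.
  by rewrite /phi linearP /= mulmxDl -scalemxAl dotr_scalar.
exists (P0 + P0^T); split; first split.
- by rewrite /symmetric_mx linearD /= trmxK addrC.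
- move=> v v0; have := z_pos _ (rank1_density v0); rewrite -/(phi _) phiE.
  rewrite -scalemxAl linearZ /= pmulr_rgt0 ?invr_gt0 ?mulmx_trv_self_gt0 // => vP0.
  rewrite -/(qform _ _) qform_mxtrace mxtrace_mul_symmetrize ?mulr_gt0 //.
  by rewrite /symmetric_mx trmx_mul trmxK.
move=> F MF; rewrite mxtrace_mul_symmetrize; last exact: symM.
rewrite -phiE /phi.
have /eqP -> : mxvec F *m C == 0 by rewrite -submxE MV.
by rewrite /dotr big1 ?mulr0 // => j _; rewrite mxE mul0r.
Qed.

End Separation.

Lemma non_dissipative_pd_congruence (R : realType) n (M : 'M[R]_n -> Prop) :
    (forall F, M F -> symmetric_mx F) -> non_dissipative M ->
  exists Q : 'M[R]_n, pd_mx Q /\ forall F, M F -> \tr (Q^T *m F *m Q) = 0.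
Proof.
move=> symM ndM; have [P [pdP MP0]] := non_dissipative_pd_annihilator symM ndM.
have [Q [pdQ QQ]] := pd_sqrt pdP; exists Q; split => // F MF.
by rewrite pdQ.1 mxtrace_mulC mulmxA QQ mxtrace_mulC MP0.
Qed.

Unset Implicit Arguments.

Theorem lemma2p1 (R : realType) (n : nat) (M : 'M[R]_n -> Prop)
    (hne : exists F, M F) (hsym : forall F, M F -> symmetric_mx F) :
  (non_dissipative M <->
     exists Q : 'M[R]_n, pd_mx Q /\ forall F, M F -> \tr (Q^T *m F *m Q) = 0)
  /\
  ((exists Q : 'M[R]_n, pd_mx Q /\ forall F, M F -> \tr (Q^T *m F *m Q) = 0) <->
     exists T : 'M[R]_n, T \in unitmx /\ forall F, M F -> \tr (T^T *m F *m T) = 0).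
Proof.
have i_ii := non_dissipative_pd_congruence hsym.
have ii_iii (Q : 'M[R]_n) : pd_mx Q -> Q \in unitmx := @pd_mx_unit R n Q.
have iii_i (T : 'M[R]_n) : T \in unitmx ->
    (forall F, M F -> \tr (T^T *m F *m T) = 0) -> non_dissipative M.
  exact: non_dissipative_conj_traceless.
split; split.
- exact: i_ii.
- by case=> Q [pdQ MQ0]; exact: iii_i (ii_iii Q pdQ) MQ0.
- by case=> Q [pdQ MQ0]; exists Q; split => //; exact: ii_iii.
- by case=> T [unitT MT0]; exact/i_ii/(iii_i T).
Qed.
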